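(* Let $I$ be a connected and locally connected topological space and $h:I\to\mathbb{R}$ a positive continuous function attaining its lower bound at $v\in I$. For $y,z\in I$ define $$\lambda(y,z)=\sup\{\lambda : C_{y,\lambda}=C_{z,\lambda},\ \lambda\le h(y),\ \lambda\le h(z)\},\qquad d(y,z)=h(y)+h(z)-2\lambda(y,z).$$ Then $d$ is a pseudo-metric on $I$. Moreover, if $(\tilde I,\tilde d)$ is the quotient metric space obtained by identifying points $x,y$ with $d(x,y)=0$ (with $\tilde d$ the metric induced by $d$), then the canonical projection $i:I\to\tilde I$ from the topological space $I$ to the metric space $(\tilde I,\tilde d)$ is continuous.
   Context: For $x\in I$ and $\lambda\le h(x)$, $C_{x,\lambda}$ denotes the maximal connected subset of $\{y\in I: h(y)\ge\lambda\}$ containing $x$. *)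

From HB Require Import structures.
From mathcomp Require Import all_boot all_order all_algebra.
From mathcomp Require Import all_classical all_reals topology normedtype.
Set Implicit Arguments. Unset Strict Implicit. Unset Printing Implicit Defensive.
Import Order.TTheory GRing.Theory Num.Theory numFieldNormedType.Exports.
Local Open Scope classical_set_scope.
Local Open Scope ring_scope.

Definition locally_connected (T : topologicalType) : Prop :=
  forall (x : T) (U : set T), nbhs x U ->
    exists V : set T, [/\ open V, connected V, V x & V `<=` U].

Definition Ccomp (R : realType) (T : topologicalType) (h : T -> R)
  (x : T) (lam : R) : set T :=
  connected_component [set y | lam <= h y] x.

Definition lam (R : realType) (T : topologicalType) (h : T -> R) (y z : T) : R :=
  sup [set l : R | [/\ Ccomp h y l = Ccomp h z l, l <= h y & l <= h z]].

Definition hdist (R : realType) (T : topologicalType) (h : T -> R) (y z : T) : R :=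
  h y + h z - 2 * lam h y z.

(* Components only grow as the level drops, so
   the admissible levels form a down-closed set, which at level h v contains
   every pair because the whole space is connected.  Hence lam is symmetric,
   lam(y, y) = h y, and lam(x, z) >= min(lam(x, y), lam(y, z)) (an ultrametric
   inequality), which yields the triangle inequality for d.  For continuity,
   a connected neighbourhood V of x on which h > h x - e keeps every y of V
   in the component of x at level h x - e, so lam(x, y) >= h x - e there. *)
From HB Require Import structures.
From mathcomp Require Import all_boot all_order all_algebra.
From mathcomp Require Import all_classical all_reals topology normedtype.
From mathcomp Require Import lra.
Import Order.TTheory GRing.Theory Num.Theory numFieldNormedType.Exports.
Local Open Scope classical_set_scope.
Local Open Scope ring_scope.

Section Levels.
Variables (R : realType) (T : topologicalType) (h : T -> R).

Definition common_levels (y z : T) : set R :=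
  [set l | [/\ Ccomp h y l = Ccomp h z l, l <= h y & l <= h z]].

Lemma Ccomp_le_sub {x : T} {l l' : R} :
  l' <= l -> Ccomp h x l `<=` Ccomp h x l'.
Proof.
move=> l'l z [B [Bx BA connB] Bz].
by exists B => //; split => // w /BA; exact: le_trans.
Qed.

Lemma common_levels_le (y z : T) (l l' : R) :
  common_levels y z l -> l' <= l -> common_levels y z l'.
Proof.
move=> [Cyz ly lz] l'l; split; [|exact: le_trans l'l ly|exact: le_trans l'l lz].
have Cyz_z : Ccomp h y l z by rewrite Cyz; exact: connected_component_refl.
by rewrite /Ccomp (same_connected_component (Ccomp_le_sub l'l _ Cyz_z)).
Qed.

Lemma common_levelsC (y z : T) : common_levels y z = common_levels z y.
Proof. by apply/seteqP; split => l [? ? ?]. Qed.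

Lemma lamC (y z : T) : lam h y z = lam h z y.
Proof. by rewrite /lam; congr sup; exact: common_levelsC. Qed.

Lemma hdistC (y z : T) : hdist h y z = hdist h z y.
Proof. by rewrite /hdist lamC (addrC (h y)). Qed.

Variable v : T.
Hypothesis connT : connected [set: T].
Hypothesis hv_min : forall x, h v <= h x.

Lemma common_levels_min (y z : T) : common_levels y z (h v).
Proof.
have everywhere : [set w | h v <= h w] = [set: T].
  by apply/seteqP; split => // w _; exact: hv_min.
by split; rewrite ?/Ccomp ?everywhere ?connected_component_id.
Qed.

Lemma has_sup_common_levels (y z : T) : has_sup (common_levels y z).
Proof.
by split; [exists (h v); exact: common_levels_min | exists (h y) => l []].
Qed.

Lemma lam_ge (y z : T) (l : R) : common_levels y z l -> l <= lam h y z.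
Proof. by move=> Sl; apply: (sup_upper_bound (has_sup_common_levels y z)). Qed.

Lemma lam_lel (y z : T) : lam h y z <= h y.
Proof. by apply: ge_sup => [|l []//]; exists (h v); exact: common_levels_min. Qed.

Lemma lam_ler (y z : T) : lam h y z <= h z.
Proof. by rewrite lamC lam_lel. Qed.

Lemma common_levels_lt_lam {y z : T} {l : R} :
  l < lam h y z -> common_levels y z l.
Proof.
rewrite -subr_gt0 => gap.
have [l' Sl' ltl'] := sup_adherent gap (has_sup_common_levels y z).
by apply: common_levels_le Sl' _; rewrite /lam in ltl' *; lra.
Qed.

Lemma lamxx (y : T) : lam h y y = h y.
Proof. by apply/eqP; rewrite eq_le lam_lel lam_ge. Qed.

Lemma lam_ultra (x y z : T) : Num.min (lam h x y) (lam h y z) <= lam h x z.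
Proof.
rewrite leNgt; apply/negP => ltmin.
set l := (lam h x z + Num.min (lam h x y) (lam h y z)) / 2.
have [ltl1 ltl2] : l < lam h x y /\ l < lam h y z.
  by apply/andP; rewrite -lt_min /l; lra.
have [Cxy lx _] := common_levels_lt_lam ltl1.
have [Cyz _ lz] := common_levels_lt_lam ltl2.
have : l <= lam h x z by apply: lam_ge; split => //; rewrite Cxy.
by rewrite /l; lra.
Qed.

Lemma hdistxx (x : T) : hdist h x x = 0.
Proof. by rewrite /hdist lamxx; lra. Qed.

Lemma hdist_ge0 (x y : T) : 0 <= hdist h x y.
Proof. by rewrite /hdist; have := lam_lel x y; have := lam_ler x y; lra. Qed.

Lemma hdist_triangle (x y z : T) : hdist h x z <= hdist h x y + hdist h y z.
Proof.
rewrite /hdist; have := lam_ultra x y z.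
have := lam_ler x y; have := lam_lel y z.
by rewrite /Num.min; case: ifP => _; lra.
Qed.

Hypothesis lconnT : locally_connected T.
Hypothesis hcont : continuous h.

Lemma hdist_near (x : T) (e : R) : 0 < e -> \forall y \near x, hdist h x y < e.
Proof.
move=> e_gt0; have e4_gt0 : 0 < e / 4 by lra.
have /cvgrPdist_lt /(_ _ e4_gt0) hx_near := hcont x.
have [V [oV cV Vx VU]] := lconnT x _ hx_near.
have lV : forall w, V w -> h x - e / 4 <= h w.
  by move=> w /VU /= /ltr_normlP [? ?]; lra.
apply: filterS (open_nbhs_nbhs (conj oV Vx)) => y Vy.
have Cxy : Ccomp h x (h x - e / 4) y by apply: (connected_component_max Vx).
have : h x - e / 4 <= lam h x y.
  apply: lam_ge; split; [exact: same_connected_component Cxy|lra|exact: lV].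
have /= /ltr_normlP [? ?] := VU _ Vy.
by rewrite /hdist; lra.
Qed.

End Levels.

Theorem mainTheorem9 (R : realType) (T : topologicalType) (h : T -> R) (v : T) :
  connected [set: T] ->
  locally_connected T ->
  continuous h ->
  (forall x, 0 < h x) ->
  (forall x, h v <= h x) ->
  (* d is a pseudo-metric *)
  ((forall x, hdist h x x = 0) /\
   (forall x y, 0 <= hdist h x y) /\
   (forall x y, hdist h x y = hdist h y x) /\
   (forall x y z, hdist h x z <= hdist h x y + hdist h y z)) /\
  (* the projection I -> (I/~, d~) is continuous *)
  (forall (x : T) (e : R), 0 < e -> \forall y \near x, hdist h x y < e).
Proof.
move=> connT lconnT hcont _ hv_min.
split; [split; [|split; [|split]]|].
- exact: hdistxx h v connT hv_min.
- exact: hdist_ge0 h v connT hv_min.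
- exact: hdistC.
- exact: hdist_triangle h v connT hv_min.
- exact: hdist_near h v connT hv_min lconnT hcont.
Qed.
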